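(* Let $J\subset K[x,y]_y$ be a binomial ideal and let $\xi\in\mathrm{Spec}(K[x,y]_y)$ be a point where $\mathrm{Eord}_\xi(J)=\theta>0$ is maximal (over $W$). Let $f=y^\gamma x^\alpha-bx^\beta\in J$ be a binomial without common factors, with $\alpha,\beta\in\mathbb N^s$, $\gamma\in\mathbb Z^{n-s}$, $b\in K$, $0<|\alpha|\le|\beta|$, such that $\mathrm{Eord}_\xi(f)=\theta=|\alpha|$, $\xi_i=0$ for all $i$ with $\alpha_i>0$, and $y^\gamma(\xi)\neq0$. Then, in a neighbourhood of $\xi$, $\mathrm{ESing}(J,\theta)\subseteq\{x_i=0\}$ for some $i$ with $\alpha_i>0$.
   Context: $K$ is an algebraically closed field of arbitrary characteristic; $W=\mathrm{Spec}(K[x_1,\dots,x_s,y_1,\dots,y_{n-s}]_y)$ (localization at $y_1\cdots y_{n-s}$). $E\cap W=\{V(x_1),\dots,V(x_s)\}$. For $\xi\in W$ let $\Lambda(\xi)=\{i:\xi\in V(x_i)\}$ and $E^0_{\Lambda(\xi)}$ the stratum of points lying on $V(x_i)$ exactly for $i\in\Lambda(\xi)$; its ideal is generated by the $x_i$, $i\in\Lambda(\xi)$. $\mathrm{Eord}_\xi(J)=\max\{m\in\mathbb N: J_\xi\subset(I(E^0_{\Lambda(\xi)})_\xi)^m\}$, $\mathrm{Eord}_\xi(f)=\mathrm{Eord}_\xi(\langle f\rangle)$, and $\mathrm{ESing}(J,\theta)=\{\xi:\mathrm{Eord}_\xi(J)\ge\theta\}$. A binomial ideal is an ideal generated by elements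 $x^{\lambda}(1-\mu y^{\delta})$ or $x^{\nu}(y^{\gamma}x^{\alpha}-bx^{\beta})$ with $\lambda,\nu,\alpha,\beta\in\mathbb N^s$, $\gamma,\delta\in\mathbb Z^{n-s}$, $\mu,b\in K$, each $y^\gamma x^\alpha-bx^\beta$ without common factors and $0<|\alpha|\le|\beta|$. *)

From HB Require Import structures.
From mathcomp Require Import all_boot all_order all_algebra.
From mathcomp Require Import mpoly.
Set Implicit Arguments. Unset Strict Implicit. Unset Printing Implicit Defensive.
Import Order.TTheory GRing.Theory Num.Theory.
Local Open Scope ring_scope.

Section Ideals.
Variable R : comRingType.

Definition ideal_gen (G : R -> Prop) (g : R) : Prop :=
  exists s : seq (R * R), (forall p, p \in s -> G p.2) /\
                          g = \sum_(p <- s) p.1 * p.2.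

Fixpoint ideal_pow (I : R -> Prop) (m : nat) : R -> Prop :=
  match m with
  | 0 => fun _ => True
  | m'.+1 => ideal_gen (fun g => exists a b, ideal_pow I m' a /\ I b /\ g = a * b)
  end.

Definition is_ideal (q : R -> Prop) : Prop :=
  [/\ q 0, (forall a b, q a -> q b -> q (a + b)) & (forall r a, q a -> q (r * a))].

Definition prime_ideal (q : R -> Prop) : Prop :=
  [/\ is_ideal q, ~ q 1 & (forall a b, q (a * b) -> q a \/ q b)].
End Ideals.

Section Setting.
Variables (K : closedFieldType) (s t : nat).
Local Notation P := {mpoly K[s + t]}.

Definition xv (i : 'I_s) : P := 'X_(lshift t i).
Definition yv (j : 'I_t) : P := 'X_(rshift s j).
Definition xmon (a : 'I_s -> nat) : P := \prod_(i < s) xv i ^+ a i.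
Definition ymon (d : 'I_t -> nat) : P := \prod_(j < t) yv j ^+ d j.
Definition yprod : P := \prod_(j < t) yv j.

Definition ypos (g : 'I_t -> int) : 'I_t -> nat :=
  fun j => match g j with Posz k => k | Negz _ => 0%N end.
Definition yneg (g : 'I_t -> int) : 'I_t -> nat :=
  fun j => match g j with Posz _ => 0%N | Negz k => k.+1 end.

(* An ideal J of A = K[x,y]_y is represented by its contraction J' to P.
   sat G = contraction to P of the A-ideal generated by G. *)
Definition sat (G : P -> Prop) (g : P) : Prop :=
  exists k, ideal_gen G (yprod ^+ k * g).

(* points of W = Spec A : primes of P not containing y_1...y_t *)
Definition inW (q : P -> Prop) : Prop := prime_ideal q /\ ~ q yprod.

(* I(E^0_{Lambda(xi)}) = ideal generated by the x_i with xi in V(x_i) *)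
Definition IE (q : P -> Prop) : P -> Prop :=
  ideal_gen (fun g => exists i, q (xv i) /\ g = xv i).

(* J_xi subset (I(E^0_Lambda)_xi)^m, in the local ring A_xi = P_q *)
Definition EordGe (q : P -> Prop) (J : P -> Prop) (m : nat) : Prop :=
  forall g, J g -> exists u, ~ q u /\ ideal_pow (IE q) m (u * g).

Definition Eord_is (q : P -> Prop) (J : P -> Prop) (m : nat) : Prop :=
  EordGe q J m /\ (forall m', EordGe q J m' -> (m' <= m)%N).

Definition ESing (J : P -> Prop) (theta : nat) (q : P -> Prop) : Prop :=
  inW q /\ EordGe q J theta.

(* P-representative (unit multiple y^{gamma^-}) of y^gamma x^alpha - b x^beta *)
Definition binom (g : 'I_t -> int) (al be : 'I_s -> nat) (b : K) : P :=
  ymon (ypos g) * xmon al - b *: (ymon (yneg g) * xmon be).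

Definition binom_ok (al be : 'I_s -> nat) : Prop :=
  [/\ forall i, al i = 0%N \/ be i = 0%N,
      (0 < \sum_(i < s) al i)%N & (\sum_(i < s) al i <= \sum_(i < s) be i)%N].

(* allowed generators: x^lambda (1 - mu y^delta) (times the unit y^{delta^-})
   and x^nu (y^gamma x^alpha - b x^beta) *)
Definition binomial_gen (g : P) : Prop :=
  (exists (la : 'I_s -> nat) (mu : K) (d : 'I_t -> int),
      g = xmon la * (ymon (yneg d) - mu *: ymon (ypos d)))
  \/ (exists (nu : 'I_s -> nat) (ga : 'I_t -> int) (al be : 'I_s -> nat) (b : K),
      binom_ok al be /\ g = xmon nu * binom ga al be b).

Definition binomial_ideal (J : P -> Prop) : Prop :=
  exists G : P -> Prop, (forall g, G g -> binomial_gen g) /\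
                        (forall g, J g <-> sat G g).
End Setting.

Arguments xv {K s t}.
Arguments yv {K s t}.
Arguments xmon {K s t}.
Arguments ymon {K s t}.
Arguments yprod {K s t}.
Arguments sat {K s t}.
Arguments inW {K s t}.
Arguments IE {K s t}.
Arguments EordGe {K s t}.
Arguments Eord_is {K s t}.
Arguments ESing {K s t}.
Arguments binom {K s t}.
Arguments binomial_gen {K s t}.
Arguments binomial_ideal {K s t}.

From HB Require Import structures.
From mathcomp Require Import all_boot all_order all_algebra.
From mathcomp Require Import mpoly.
From Stdlib Require Import ClassicalEpsilon.
Set Implicit Arguments. Unset Strict Implicit. Unset Printing Implicit Defensive.
Import Order.TTheory GRing.Theory Num.Theory.
Local Open Scope ring_scope.

(* If [x_i0] is not in a point [q] of [W] although [alpha_i0 > 0], grade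
   [K[x,y]] by giving weight one to the variables of [I(E^0)] at [q]. Then
   [f = y^gamma x^alpha - b x^beta] has a nonzero component of degree at most
   [|alpha| - alpha_i0 < |alpha|] (the two monomials differ since [x_i0] only
   divides the first), and any [u] outside [q] has a degree-zero component
   congruent to [u] modulo [q], hence nonzero. So [u f] has a nonzero
   component of degree [< |alpha|] and cannot lie in [I(E^0)^|alpha|], i.e.
   [Eord_q(f) < theta]. *)

Section Ideal.
Variables (R : comNzRingType) (q : R -> Prop).
Hypothesis q_ideal : is_ideal q.

Lemma ideal0 : q 0. Proof. by case: q_ideal. Qed.

Lemma idealD a b : q a -> q b -> q (a + b).
Proof. by case: q_ideal => _ + _; apply. Qed.

Lemma idealMl r a : q a -> q (r * a).
Proof. by case: q_ideal => _ _; apply. Qed.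

End Ideal.

Section MulXnImage.
Variables (R S : comNzRingType) (psi : {rmorphism R -> {poly S}}).

Lemma rmorph_ideal_gen_mulXn k (G : R -> Prop) g :
  (forall x, G x -> exists r, psi x = 'X^k * r) ->
  ideal_gen G g -> exists r, psi g = 'X^k * r.
Proof.
move=> psiG [gs [gsG ->]]; rewrite rmorph_sum /=.
elim: gs gsG => [|[a x] gs IHgs] gsG; first by exists 0; rewrite big_nil mulr0.
rewrite big_cons rmorphM /=.
have [r ->] := psiG x (gsG _ (mem_head _ _)).
have [p gs_p|r' ->] := IHgs; first by apply: gsG; rewrite inE gs_p orbT.
by exists (psi a * r + r'); rewrite mulrDr mulrCA.
Qed.

Lemma rmorph_ideal_pow_mulXn (G : R -> Prop) m g :
  (forall x, G x -> exists r, psi x = 'X * r) ->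
  ideal_pow (ideal_gen G) m g -> exists r, psi g = 'X^m * r.
Proof.
move=> psiG; elim: m g => [|m IHm] g /=; first by exists (psi g); rewrite mul1r.
apply: rmorph_ideal_gen_mulXn => _ [a [x [pow_a [Gx ->]]]].
have [r psia] := IHm a pow_a.
have [r' psix] := @rmorph_ideal_gen_mulXn 1 _ _ psiG Gx.
by exists (r * r'); rewrite rmorphM /= psia psix mulrACA -exprSr.
Qed.

End MulXnImage.

Lemma mul_neq_mulXn (S : idomainType) (u f r : {poly S}) m d :
  u`_0 != 0 -> f`_d != 0 -> (d < m)%N -> u * f != 'X^m * r.
Proof.
move=> u0 fd dm; have f_nz : exists d, f`_d != 0 by exists d.
case: (ex_minnP f_nz) => c fc c_min.
have cm : (c < m)%N := leq_ltn_trans (c_min d fd) dm.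
have : (u * f)`_c != 0.
  rewrite coefMr big_ord_recr /= subnn big1 ?add0r ?mulf_neq0 // => j _.
  suff /eqP -> : f`_j == 0 by rewrite mulr0.
  by apply: contraTT (ltn_ord j) => /c_min; rewrite -leqNgt.
by apply: contraNneq => ->; rewrite coefXnM cm.
Qed.

Section ConstantTermCongruence.
Variables (R : comNzRingType) (n : nat) (q : {mpoly R[n]} -> Prop).
Hypothesis q_ideal : is_ideal q.
Variable phi : {rmorphism {mpoly R[n]} -> {mpoly R[n]}}.
Hypothesis phiC : forall c, phi c%:MP = c%:MP.
Hypothesis phiX : forall i, q ('X_i - phi 'X_i).

Lemma mpoly_sub_rmorph_in_ideal p : q (p - phi p).
Proof.
have sub_mul a b : q (a - phi a) -> q (b - phi b) -> q (a * b - phi (a * b)).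
  have -> : a * b - phi (a * b) = b * (a - phi a) + phi a * (b - phi b).
    by rewrite rmorphM !mulrBr addrA (mulrC b a) (mulrC b) subrK.
  by move=> qa qb; apply: idealD => //; apply: idealMl.
elim/mpolyind: p => [|c m p _ _ qp]; first by rewrite rmorph0 subrr; apply: ideal0.
rewrite rmorphD opprD addrACA; apply: idealD => //.
rewrite -mul_mpolyC mpolyXE_id; apply: (sub_mul).
  by rewrite phiC subrr; apply: ideal0.
apply: (big_ind (fun a => q (a - phi a))) => [||i _].
- by rewrite rmorph1 subrr; apply: ideal0.
- exact: (sub_mul).
elim: (m i) => [|e IHe]; first by rewrite expr0 rmorph1 subrr; apply: ideal0.
by rewrite exprS; apply: (sub_mul).
Qed.

End ConstantTermCongruence.

Section QGrade.
Variables (R : comNzRingType) (n : nat) (q : {mpoly R[n]} -> Prop).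
Hypothesis q_ideal : is_ideal q.

(* Substituting [X * x_k] for the variables [x_k] in [q]: the coefficient of
   [X^d] in [qgrade p] is the part of [p] of degree [d] in those variables. *)
Definition qweight (k : 'I_n) : nat :=
  if excluded_middle_informative (q 'X_k) then 1 else 0.

Definition qgrade_var (k : 'I_n) : {poly {mpoly R[n]}} := 'X^(qweight k) * ('X_k)%:P.

Definition qgrade : {rmorphism {mpoly R[n]} -> {poly {mpoly R[n]}}} :=
  mmap (polyC \o @mpolyC n R) qgrade_var.

Lemma qweight1 k : q 'X_k -> qweight k = 1%N.
Proof. by rewrite /qweight; case: excluded_middle_informative. Qed.

Lemma qweight0 k : ~ q 'X_k -> qweight k = 0%N.
Proof. by rewrite /qweight; case: excluded_middle_informative. Qed.

Lemma qweight_mul_leq k m : (qweight k * m <= m)%N.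
Proof.
by case: (excluded_middle_informative (q 'X_k)) => [/qweight1|/qweight0] ->; rewrite ?mul1n.
Qed.

Lemma qgradeC c : qgrade c%:MP = (c%:MP)%:P.
Proof. by rewrite /qgrade /= mmapC. Qed.

Lemma qgradeX k : qgrade 'X_k = 'X^(qweight k) * ('X_k)%:P.
Proof. by rewrite /qgrade /= mmapX mmap1U. Qed.

Lemma qgrade_prod_expr m (v : 'I_m -> 'I_n) (e : 'I_m -> nat) :
  qgrade (\prod_(i < m) 'X_(v i) ^+ e i) =
  'X^(\sum_(i < m) qweight (v i) * e i) * (\prod_(i < m) 'X_(v i) ^+ e i)%:P.
Proof.
rewrite rmorph_prod [in RHS]rmorph_prod expr_sum -big_split /=; apply: eq_bigr => i _.
by rewrite rmorphXn qgradeX exprMn -exprM rmorphXn mulnC.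
Qed.

Lemma qgrade_ideal_pow (G : {mpoly R[n]} -> Prop) m g :
  (forall x, G x -> exists k, q 'X_k /\ x = 'X_k) ->
  ideal_pow (ideal_gen G) m g -> exists r, qgrade g = 'X^m * r.
Proof.
move=> Gvar; apply: rmorph_ideal_pow_mulXn => _ /Gvar[k [qk ->]].
by exists ('X_k)%:P; rewrite qgradeX qweight1.
Qed.

Lemma qgrade_coef0_congr p : q (p - (qgrade p)`_0).
Proof.
rewrite -horner_coef0; apply: (@mpoly_sub_rmorph_in_ideal _ _ _ _ (horner_eval 0 \o qgrade)) => //.
    by move=> c; rewrite /= horner_evalE qgradeC hornerC.
move=> k; rewrite /= horner_evalE qgradeX hornerM hornerC hornerXn.
case: (excluded_middle_informative (q 'X_k)) => qk.
  by rewrite qweight1 // expr1 mul0r subr0.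
by rewrite qweight0 // expr0 mul1r subrr; apply: ideal0.
Qed.

Lemma qgrade_coef0_neq0 u : ~ q u -> (qgrade u)`_0 != 0.
Proof.
move=> qu; apply: contra_notN qu => /eqP u0.
by have := qgrade_coef0_congr u; rewrite u0 subr0.
Qed.

End QGrade.

Section BinomialOrder.
Variables (K : closedFieldType) (s t : nat).
Local Notation P := {mpoly K[s + t]}.

Lemma binom_ok_exists_pos (al be : 'I_s -> nat) :
  binom_ok al be -> exists i, (0 < al i)%N.
Proof.
case=> _ + _; case: (pickP (fun i => 0 < al i)%N) => [i al_i _|al0]; first by exists i.
by rewrite big1 // => i _; apply/eqP; rewrite -leqn0 leqNgt al0.
Qed.

Definition xpoint (z : 'I_s -> K) (k : 'I_(s + t)) : K :=
  if split k is inl i then z i else 1.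

Lemma meval_xpoint z (g : 'I_t -> nat) (h : 'I_s -> nat) :
  meval (xpoint z) (ymon g * xmon h : P) = \prod_(i < s) z i ^+ h i.
Proof.
rewrite mevalM !rmorph_prod /= big1 ?mul1r => [|j _].
  by apply: eq_bigr => i _; rewrite rmorphXn /= mevalXU /xpoint (unsplitK (inl i)).
by rewrite rmorphXn /= mevalXU /xpoint (unsplitK (inr j)) expr1n.
Qed.

Lemma ymon_xmon_sub_scale_neq0 (yp yn : 'I_t -> nat) (al be : 'I_s -> nat) i0 (c : K) :
  (0 < al i0)%N -> be i0 = 0%N -> ymon yp * xmon al - c *: (ymon yn * xmon be) != 0 :> P.
Proof.
move=> al_i0 be_i0; apply/eqP => eq0.
have at_ones := congr1 (meval (xpoint (fun=> 1))) eq0.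
have := congr1 (meval (xpoint (fun i => (i != i0)%:R))) eq0.
rewrite !(mevalB, mevalZ, meval0, meval_xpoint) in at_ones *.
have prod_x0 h : \prod_(i < s) (i != i0)%:R ^+ h i = (h i0 == 0)%:R :> K.
  by rewrite (bigD1 i0) //= eqxx expr0n big1 ?mulr1 // => i /negPf ->; rewrite expr1n.
rewrite !prod_x0 be_i0 gtn_eqF // mulr1 sub0r => /eqP; rewrite oppr_eq0 => /eqP c0.
move: at_ones; rewrite c0 mul0r subr0 big1 => [|i _]; last exact: expr1n.
by apply/eqP; rewrite oner_eq0.
Qed.

Variable q : P -> Prop.
Hypothesis qW : inW q.

Let q_ideal : is_ideal q. Proof. by case: qW => -[]. Qed.

Lemma yv_notin j : ~ q (yv j).
Proof.
by case: qW => _ qy qj; apply: qy; rewrite /yprod (bigD1 j) //= mulrC; apply: idealMl.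
Qed.

Lemma qgrade_ymon g : qgrade q (ymon g) = (ymon g)%:P.
Proof.
rewrite qgrade_prod_expr big1 ?expr0 ?mul1r // => j _.
by rewrite qweight0 //; apply: yv_notin.
Qed.

Lemma qgrade_xmon g :
  qgrade q (xmon g) = 'X^(\sum_(i < s) qweight q (lshift t i) * g i) * (xmon g)%:P.
Proof. exact: qgrade_prod_expr. Qed.

Lemma qgrade_IE_pow m g : ideal_pow (IE q) m g -> exists r, qgrade q g = 'X^m * r.
Proof. by apply: qgrade_ideal_pow => _ [i [? ->]]; exists (lshift t i). Qed.

Lemma binom_notin_ideal_pow (ga : 'I_t -> int) (al be : 'I_s -> nat) b i0 u :
  binom_ok al be -> (0 < al i0)%N -> ~ q (xv i0) -> ~ q u ->
  ~ ideal_pow (IE q) (\sum_(i < s) al i) (u * binom ga al be b).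
Proof.
move=> [disj _ _] al_i0 xi0 qu.
have be_i0 : be i0 = 0%N by case: (disj i0) => // al0; rewrite al0 in al_i0.
set A : P := ymon (ypos ga) * xmon al; set B : P := ymon (yneg ga) * xmon be.
set dA := (\sum_(i < s) qweight q (lshift t i) * al i)%N.
set dB := (\sum_(i < s) qweight q (lshift t i) * be i)%N.
have coef_dA : (qgrade q (binom ga al be b))`_dA = A - (b * (dA == dB)%:R) *: B.
  rewrite rmorphB -mul_mpolyC !rmorphM qgradeC.
  rewrite qgrade_ymon qgrade_ymon !qgrade_xmon -/dA -/dB.
  rewrite [_%:P * ('X^dA * _)]mulrCA [_%:P * ('X^dB * _)]mulrCA -!polyCM -/A -/B.
  rewrite coefB coefXnM ltnn subnn coefC coefCM [_ * _%:P]mulrC coefCM coefXn eqxx.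
  by case: eqP => _; rewrite ?mulr1 ?mulr0 ?mul_mpolyC ?scale0r.
have dA_lt : (dA < \sum_(i < s) al i)%N.
  rewrite /dA (bigD1 i0) //= [ltnRHS](bigD1 i0) //= qweight0 // mul0n add0n.
  apply: (@leq_ltn_trans (\sum_(i < s | i != i0) al i)).
    by apply: leq_sum => i _; apply: qweight_mul_leq.
  by rewrite -[ltnLHS]add0n ltn_add2r.
move=> /qgrade_IE_pow[r]; rewrite rmorphM => /eqP; apply/negP.
apply: (mul_neq_mulXn r _ _ dA_lt); first exact: qgrade_coef0_neq0.
by rewrite coef_dA; apply: ymon_xmon_sub_scale_neq0 al_i0 be_i0.
Qed.

End BinomialOrder.

Theorem mainTheorem8 (K : closedFieldType) (s t : nat)
  (J : {mpoly K[s + t]} -> Prop) (xi : {mpoly K[s + t]} -> Prop) (theta : nat)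
  (ga : 'I_t -> int) (al be : 'I_s -> nat) (b : K) :
  binomial_ideal J ->
  inW xi ->
  (0 < theta)%N ->
  Eord_is xi J theta ->
  (forall q, inW q -> ~ EordGe q J theta.+1) ->
  binom_ok al be ->
  J (binom ga al be b) ->
  Eord_is xi (sat (fun g => g = binom ga al be b)) theta ->
  theta = (\sum_(i < s) al i)%N ->
  (forall i, (0 < al i)%N -> xi (@xv K s t i)) ->
  ~ xi (ymon (ypos ga) * ymon (yneg ga)) ->
  exists i : 'I_s, (0 < al i)%N /\
    exists h : {mpoly K[s + t]}, ~ xi h /\
      forall q, inW q -> ~ q h -> ESing J theta q -> q (@xv K s t i).
Proof.
move=> _ [[_ xi1 _] _] _ _ _ f_ok Jf _ -> _ _.
have [i0 al_i0] := binom_ok_exists_pos f_ok.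
exists i0; split => //; exists 1; split => // q qW _ [_ EordGe_f].
have [u [qu u_f]] := EordGe_f _ Jf.
case: (excluded_middle_informative (q (xv i0))) => // xi0.
by case: (binom_notin_ideal_pow qW f_ok al_i0 xi0 qu u_f).
Qed.
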